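(* Let $\Psi\vdash\sigma:\Gamma\Rightarrow\Delta$ and $\Psi\vdash\tau:\Delta\Rightarrow\Sigma$ be derivable in $TT_{Sig}$. Suppose $(A:\Sigma)\in\Psi$ and $(y:A\,\tau)\in\Delta$. Then $([\![\sigma]\!](y):A\,(\sigma\cdot\tau))\in\Gamma$.
   Context: **Syntax of $TT_{Sig}$.** - Signatures: $\Psi::=\bullet\mid\Psi,A:\Gamma$. - Contexts: $\Gamma::=\bullet\mid\Gamma,x:X$. - Substitutions: $\sigma::=\epsilon\mid(\sigma,z)$. - Sorts: $X::=A\,\sigma$. - Here $A$ ranges over sort names and $x,z$ over variables. - $(A:\Delta)\in\Psi$ and $(x:X)\in\Gamma$ denote membership in the list. **Rules.** - From $\Psi;\Gamma\vdash$, $\Psi;\Gamma\vdash X$ and $x$ not already bound in $\Gamma$, infer $\Psi;\Gamma,x:X\vdash$; also $\Psi;\bullet\vdash$. - (Substitutions) $\Psi\vdash\epsilon:\Gamma\Rightarrow\bullet$; and from $\Psi\vdash\sigma:\Gamma\Rightarrow\Delta$ and $\Psi;\Gamma\vdash z:\sigma(X)$, infer $\Psi\vdash(\sigma,z):\Gamma\Rightarrow\Delta,x:X$. - (Variables) From $(x:X)\in\Gamma$ and $\Psi;\Gamma\vdash$, infer $\Psi;\Gamma\vdash x:X$. - (Sorts) From $(A:\Delta)\in\Psi$ and $\Psi\vdash\sigma:\Gamma\Rightarrow\Delta$, infer $\Psi;\Gamma\vdash A\,\sigma$. **Auxiliary definitions.** - $|\bullet|=\varnothing$ and $|\Gamma,x:X|=|\Gamma|\amalg\{x\}$.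 - For well-formed $\sigma:\Gamma\Rightarrow\Delta$, define $[\![\sigma]\!]:|\Delta|\to|\Gamma|$ by: $[\![\epsilon]\!]$ is empty, and $[\![\sigma,z]\!]$ sends $y\in|\Delta|$ to $[\![\sigma]\!](y)$ and the last variable $x$ to $z$. - The composite is defined by $\sigma\cdot\epsilon=\epsilon$ and $\sigma\cdot(\tau,z)=(\sigma\cdot\tau,[\![\sigma]\!](z))$. - The action on sorts is $\sigma(A\,\tau)=A\,(\sigma\cdot\tau)$. *)

From Stdlib Require Import List Arith.
Import ListNotations.

Definition var := nat.
Definition sname := nat.

(* Substitutions  sigma ::= eps | (sigma, z)  as lists, HEAD = LAST entry. *)
Definition subst := list var.
Definition sort : Type := (sname * subst)%type.
(* Contexts  Gamma ::= . | Gamma, x:X  as lists, HEAD = LAST entry. *)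
Definition ctx := list (var * sort).
(* Signatures  Psi ::= . | Psi, A:Gamma  as lists, HEAD = LAST entry. *)
Definition signature := list (sname * ctx).

(* [[sigma]] : |Delta| -> |Gamma| for sigma : Gamma => Delta.
   [[sigma, z]] sends the last variable x of (Delta, x:X) to z and
   every other y in |Delta| to [[sigma]](y).  (Total function; the value
   outside |Delta| is an irrelevant default.) *)
Fixpoint interp (sigma : subst) (Delta : ctx) (y : var) : var :=
  match sigma, Delta with
  | z :: sigma', (x, _) :: Delta' =>
      if Nat.eqb y x then z else interp sigma' Delta' y
  | _, _ => y
  end.

Definition comp (sigma : subst) (Delta : ctx) (tau : subst) : subst :=
  map (interp sigma Delta) tau.

Definition act (sigma : subst) (Delta : ctx) (X : sort) : sort :=
  (fst X, comp sigma Delta (snd X)).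

(* Typing judgments:
   wf_ctx Psi Gamma          :  Psi; Gamma |-
   wf_sort Psi Gamma X       :  Psi; Gamma |- X
   wf_subst Psi s Gamma Delta:  Psi |- s : Gamma => Delta
   has_var Psi Gamma x X     :  Psi; Gamma |- x : X *)
Inductive wf_ctx : signature -> ctx -> Prop :=
| wf_nil : forall Psi, wf_ctx Psi []
| wf_snoc : forall Psi Gamma x X,
    wf_ctx Psi Gamma -> wf_sort Psi Gamma X ->
    ~ In x (map fst Gamma) ->
    wf_ctx Psi ((x, X) :: Gamma)
with wf_subst : signature -> subst -> ctx -> ctx -> Prop :=
| ws_eps : forall Psi Gamma, wf_subst Psi [] Gamma []
| ws_snoc : forall Psi sigma z Gamma Delta x X,
    wf_subst Psi sigma Gamma Delta ->
    has_var Psi Gamma z (act sigma Delta X) ->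
    wf_subst Psi (z :: sigma) Gamma ((x, X) :: Delta)
with has_var : signature -> ctx -> var -> sort -> Prop :=
| hv_var : forall Psi Gamma x X,
    In (x, X) Gamma -> wf_ctx Psi Gamma -> has_var Psi Gamma x X
with wf_sort : signature -> ctx -> sort -> Prop :=
| wsort : forall Psi Gamma A Delta sigma,
    In (A, Delta) Psi -> wf_subst Psi sigma Gamma Delta ->
    wf_sort Psi Gamma (A, sigma).

(* Looking up the last
   variable x of Delta, x : X gives z : sigma(X) in Gamma by the last typing
   premise.  Every other entry y : Y of Delta lives in the earlier context, so
   y <> x and x does not occur in Y; hence [[sigma, z]] acts on y and on Y
   exactly as [[sigma]] does, and the induction hypothesis applies. *)
From Stdlib Require Import List Arith.

Lemma wf_subst_incl_dom {Psi sigma Gamma Delta} :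
  wf_subst Psi sigma Gamma Delta -> incl sigma (map fst Gamma).
Proof.
  induction 1 as [|? sigma z Gamma Delta x X _ IH Hz]; [apply incl_nil_l|].
  apply incl_cons; [|exact IH].
  inversion Hz as [? ? ? ? Hin _]; subst.
  exact (in_map fst _ _ Hin).
Qed.

Lemma wf_sort_incl_dom {Psi Gamma A sigma} :
  wf_sort Psi Gamma (A, sigma) -> incl sigma (map fst Gamma).
Proof.
  inversion 1; subst. eapply wf_subst_incl_dom; eassumption.
Qed.

Lemma wf_ctx_lookup_incl_dom {Psi Delta y A sigma} :
  wf_ctx Psi Delta -> In (y, (A, sigma)) Delta -> incl sigma (map fst Delta).
Proof.
  induction 1 as [|? Delta x X _ IH HX _]; [contradiction|].
  intros [Heq | Hin]; apply incl_tl.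
  - inversion Heq; subst. exact (wf_sort_incl_dom HX).
  - exact (IH Hin).
Qed.

Lemma interp_cons_neq z sigma x X Delta y :
  y <> x -> interp (z :: sigma) ((x, X) :: Delta) y = interp sigma Delta y.
Proof.
  intros Hne. simpl. destruct (Nat.eqb_spec y x); congruence.
Qed.

Lemma act_cons_fresh z sigma x X Delta Y :
  ~ In x (snd Y) -> act (z :: sigma) ((x, X) :: Delta) Y = act sigma Delta Y.
Proof.
  intros Hx. unfold act, comp. f_equal.
  apply map_ext_in. intros v Hv. apply interp_cons_neq.
  intros ->. exact (Hx Hv).
Qed.

Lemma wf_subst_lookup {Psi sigma Gamma Delta} y Y :
  wf_ctx Psi Delta -> wf_subst Psi sigma Gamma Delta -> In (y, Y) Delta ->
  In (interp sigma Delta y, act sigma Delta Y) Gamma.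
Proof.
  intros HDelta Hsigma. revert y Y HDelta.
  induction Hsigma as [|? sigma z Gamma Delta x X _ IH Hz];
    intros y [B t] HDelta Hin; [contradiction|].
  inversion HDelta as [|? ? ? ? HDelta' HX Hfresh]; subst.
  destruct Hin as [Heq | Hin].
  - inversion Heq; subst. simpl interp. rewrite Nat.eqb_refl.
    rewrite act_cons_fresh by exact (fun H => Hfresh (wf_sort_incl_dom HX _ H)).
    inversion Hz; assumption.
  - rewrite interp_cons_neq
      by (intros ->; exact (Hfresh (in_map fst _ _ Hin))).
    rewrite act_cons_fresh
      by exact (fun H => Hfresh (wf_ctx_lookup_incl_dom HDelta' Hin _ H)).
    exact (IH y (B, t) HDelta' Hin).
Qed.

Theorem mainTheorem3 (Psi : signature) (Gamma Delta Sigma : ctx)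
  (sigma tau : subst) (A y : sname) :
  wf_ctx Psi Delta ->
  wf_subst Psi sigma Gamma Delta ->
  wf_subst Psi tau Delta Sigma ->
  In (A, Sigma) Psi ->
  In (y, (A, tau)) Delta ->
  In (interp sigma Delta y, (A, comp sigma Delta tau)) Gamma.
Proof.
  intros HDelta Hsigma _ _ Hy.
  exact (wf_subst_lookup y (A, tau) HDelta Hsigma Hy).
Qed.
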